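(* Under the standing assumptions, $G$ does not contain a vertex $v$ of degree $8$ together with pairwise distinct neighbours $u,w,y,z,t$ of $v$ and a vertex $x\notin\{v,u,w,y,z,t\}$ such that $d(u)=2$, $d(w)=d(z)=3$, $x$ is adjacent to both $u$ and $w$, and $wy,zt\in E(G)$.
   Context: Standing assumptions: A total $9$-coloring of a graph is an assignment of colors from $\{1,\dots,9\}$ to the vertices and edges such that adjacent vertices, edges sharing an endpoint, and a vertex and an incident edge receive different colors. A $4$-fan is the graph on six vertices $c,u_1,\dots,u_5$ with edges $cu_j$ ($1\le j\le5$) and $u_ju_{j+1}$ ($1\le j\le4$). $G$ is a minimal counterexample: $G$ is a simple planar graph with maximum degree $8$, containing no subgraph isomorphic to a $4$-fan, that has no total $9$-coloring, and such that every simple planar graph $H$ with maximum degree at most $8$, no subgraph isomorphic to a $4$-fan, and $|V(H)|+|E(H)|<|V(G)|+|E(G)|$ has a total $9$-coloring. $d(\cdot)$ denotes degree in $G$. *)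

From mathcomp Require Import all_boot.
From Stdlib Require Import Reals.

Set Implicit Arguments.
Unset Strict Implicit.
Unset Printing Implicit Defensive.

Section Graphs.
Variable T : finType.
Variable e : rel T.

Definition sgraph : Prop := symmetric e /\ irreflexive e.

Definition deg (v : T) : nat := #|[set y | e v y]|.

Definition edges : {set {set T}} := [set [set x; y] | x in T, y in T & e x y].

Definition nedges : nat := #|edges|.

(* G contains a subgraph (not necessarily induced) isomorphic to the 4-fan:
   centre c, path u1 u2 u3 u4 u5, all six vertices distinct. *)
Definition has_4fan : Prop :=
  exists c u1 u2 u3 u4 u5 : T,
    [/\ uniq [:: c; u1; u2; u3; u4; u5],
        [&& e c u1, e c u2, e c u3, e c u4 & e c u5] &
        [&& e u1 u2, e u2 u3, e u3 u4 & e u4 u5]].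

(* total 9-colouring: colours of vertices cv, colours of edges ce
   (ce x y is the colour of edge xy, required symmetric on edges). *)
Definition total9_colorable : Prop :=
  exists (cv : T -> 'I_9) (ce : T -> T -> 'I_9),
    (forall x y, e x y -> ce x y = ce y x) /\
    (forall x y, e x y -> cv x != cv y) /\
    (forall x y z, e x y -> e x z -> y != z -> ce x y != ce x z) /\
    (forall x y, e x y -> cv x != ce x y).

(* Planarity: a drawing in R^2 with distinct vertex points and, for every edge,
   a continuous injective arc joining its endpoints, whose interior avoids
   all vertex points and the interiors of all other edges' arcs.
   g x y is the arc drawn for the edge xy traversed from x to y. *)
Definition planar : Prop :=
  exists (p : T -> (R * R)%type) (g : T -> T -> R -> (R * R)%type),
    injective p /\
    forall x y, e x y ->
      [/\ continuity (fun t => fst (g x y t)) /\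
          continuity (fun t => snd (g x y t)),
          g x y 0%R = p x /\ g x y 1%R = p y,
          (forall s t, (0 <= s <= 1)%R -> (0 <= t <= 1)%R ->
                       g x y s = g x y t -> s = t),
          (forall z t, (0 < t < 1)%R -> g x y t <> p z) &
          (forall x' y' s t, e x' y' -> (0 < s < 1)%R -> (0 < t < 1)%R ->
              g x y s = g x' y' t ->
              (x' = x /\ y' = y) \/ (x' = y /\ y' = x))].

End Graphs.

(* Delete the edge uv and totally colour the smaller graph by minimality.
   Since d(u) = 2 and d(w) = d(z) = 3, each of u, w, z sees at most 6 colours
   on its neighbours and incident edges, so their vertex colours can be chosen
   last and only the edge colours matter.  Some colour b is missing at v; a
   short case analysis recolours the edges uv, ux, vw, xw, wy, vy, vz, vt, zt
   so that the colours at x, y, t are only permuted, those at v are permuted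
   together with b, and the edges at u, w, z get distinct colours. *)

From mathcomp Require Import all_boot.
From Stdlib Require Import Reals.

Set Implicit Arguments.
Unset Strict Implicit.
Unset Printing Implicit Defensive.

Lemma mem_relE (T : Type) (r : rel T) p q : (q \in r p) = r p q.
Proof. by []. Qed.

Section Subgraphs.
Variables (T : finType) (e f : rel T).
Hypothesis fe : subrel f e.

Lemma planar_subrel : planar e -> planar f.
Proof.
move=> [p [g [inj_p arcs]]]; exists p, g; split=> // a b /fe eab.
by case: (arcs a b eab) => c1 c2 c3 c4 c5; split=> // a' b' s t /fe; exact: c5.
Qed.

Lemma has_4fan_subrel : has_4fan f -> has_4fan e.
Proof.
move=> [c [u1 [u2 [u3 [u4 [u5 [U /and5P[? ? ? ? ?] /and4P[? ? ? ?]]]]]]]].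
by exists c, u1, u2, u3, u4, u5; split; rewrite // ?fe.
Qed.

Lemma deg_subrel p : deg f p <= deg e p.
Proof. by apply: subset_leq_card; apply/subsetP=> q; rewrite !inE => /fe. Qed.

Lemma edges_subrel : edges f \subset edges e.
Proof.
apply/subsetP=> pq /imset2P[p q _]; rewrite inE => /fe epq ->.
by apply/imset2P; exists p q; rewrite ?inE.
Qed.

End Subgraphs.

Definition same_edge (T : eqType) (a b p q : T) :=
  (p == a) && (q == b) || (p == b) && (q == a).

Lemma same_edgeC (T : eqType) (a b p q : T) : same_edge a b p q = same_edge a b q p.
Proof. by rewrite /same_edge orbC andbC [(q == b) && _]andbC. Qed.

Definition delete_edge (T : eqType) (e : rel T) (a b : T) : rel T :=
  fun p q => e p q && ~~ same_edge a b p q.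

Section DeleteEdge.
Variables (T : finType) (e : rel T) (a b : T).

Lemma delete_edge_subrel : subrel (delete_edge e a b) e.
Proof. by move=> p q /andP[]. Qed.

Lemma sgraph_delete_edge : sgraph e -> sgraph (delete_edge e a b).
Proof.
move=> [esym eirr]; split=> [p q|p]; last by rewrite /delete_edge eirr.
by rewrite /delete_edge esym same_edgeC.
Qed.

Lemma nedges_delete_edge : irreflexive e -> e a b -> nedges (delete_edge e a b) < nedges e.
Proof.
move=> eirr eab; rewrite /nedges; apply: proper_card.
rewrite properE edges_subrel /=; last exact: delete_edge_subrel.
apply/subsetPn; exists [set a; b]; first by apply/imset2P; exists a b; rewrite ?inE.
apply/negP=> /imset2P[p q _]; rewrite inE => /andP[_ /andP[epq not_ab]] ab_pq.
have p_ab : p \in [set a; b] by rewrite ab_pq set21.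
have q_ab : q \in [set a; b] by rewrite ab_pq set22.
move: p_ab q_ab not_ab epq; rewrite /same_edge !inE.
by case/orP=> /eqP-> /orP[]/eqP->; rewrite ?eqxx ?orbT ?eirr.
Qed.

End DeleteEdge.

Lemma delete_edge_colorable (T : finType) (e : rel T) (a b : T) :
  sgraph e -> planar e -> (forall v, deg e v <= 8) -> ~ has_4fan e ->
  (forall (U : finType) (f : rel U),
      sgraph f -> planar f -> (forall v, deg f v <= 8) -> ~ has_4fan f ->
      #|U| + nedges f < #|T| + nedges e -> total9_colorable f) ->
  e a b -> total9_colorable (delete_edge e a b).
Proof.
move=> [esym eirr] pl deg8 no4fan minimal eab; have sub := @delete_edge_subrel _ e a b.
apply: minimal.
- exact: sgraph_delete_edge.
- exact: planar_subrel pl.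
- by move=> p; apply: leq_trans (deg_subrel sub p) (deg8 p).
- by move/(has_4fan_subrel sub).
- by rewrite ltn_add2l nedges_delete_edge.
Qed.

Lemma exists_color_notin (l : seq 'I_9) : size l < 9 -> exists k, k \notin l.
Proof.
move=> size_l; apply/existsP; rewrite -negb_forall; apply: contraTN size_l => /forallP l_full.
rewrite -leqNgt -{1}(card_ord 9); apply: leq_trans (card_size l).
by apply/subset_leq_card/subsetP=> k _; apply: l_full.
Qed.

Definition total_coloring (T : finType) (e : rel T) (cv : T -> 'I_9) (ce : T -> T -> 'I_9) :=
  [/\ forall p q, e p q -> ce p q = ce q p,
      forall p q, e p q -> cv p != cv q,
      forall p, {in e p &, injective (ce p)} &
      forall p q, e p q -> cv p != ce p q].

Lemma total9_colorableP (T : finType) (e : rel T) :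
  total9_colorable e <-> exists cv ce, total_coloring e cv ce.
Proof.
split=> [[cv [ce [sym [vtx [edg inc]]]]]|[cv [ce [sym vtx edg inc]]]]; exists cv, ce.
  split=> // p q r epq epr; apply: contra_eq; exact: edg.
split=> //; split=> //; split=> // p q r epq epr; apply: contra_neq; exact: edg.
Qed.

Lemma recolor_sparse_vertices (T : finType) (e : rel T) (D : pred T)
    (cv : T -> 'I_9) (ce : T -> T -> 'I_9) :
  symmetric e -> {in D, forall p, deg e p <= 4} ->
  (forall p q, e p q -> p \in D -> q \notin D) ->
  (forall p q, e p q -> ce p q = ce q p) ->
  (forall p q, e p q -> p \notin D -> q \notin D -> cv p != cv q) ->
  (forall p, {in e p &, injective (ce p)}) ->
  (forall p q, e p q -> p \notin D -> cv p != ce p q) ->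
  total9_colorable e.
Proof.
move=> esym degD indepD sym vtx edg inc.
pose seen p := [seq cv q | q in e p] ++ [seq ce p q | q in e p].
have /fin_all_exists[cvD cvD_fresh] : forall p, exists k, p \in D -> k \notin seen p.
  move=> p; have [pD|pD] := boolP (p \in D); last by exists ord0.
  have [k k_fresh] : exists k, k \notin seen p.
    apply: exists_color_notin; rewrite size_cat !size_image ltnS.
    by have := degD p pD; rewrite /deg cardsE => deg_p; apply: (leq_add deg_p deg_p).
  by exists k.
pose cv' p := if p \in D then cvD p else cv p.
have seen_nbr p q : p \in D -> e p q -> cv' p != cv' q.
  move=> pD epq; rewrite /cv' pD (negbTE (indepD p q epq pD)).
  by apply: contraNneq (cvD_fresh p pD) => ->; rewrite mem_cat map_f ?mem_enum.
apply/total9_colorableP; exists cv', ce; split=> // [p q epq|p q epq].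
  have [pD|pD] := boolP (p \in D); first exact: seen_nbr.
  have [qD|qD] := boolP (q \in D); last by rewrite /cv' (negbTE pD) (negbTE qD) vtx.
  by rewrite eq_sym seen_nbr // esym.
rewrite /cv'; case: ifP => [pD|/negbT pD]; last exact: inc.
by apply: contraNneq (cvD_fresh p pD) => ->; rewrite mem_cat orbC map_f ?mem_enum.
Qed.

Section EdgeRecoloring.
Variables (T C : eqType).

(* The first entry of [s] naming the edge pq decides its new colour. *)
Definition recolor_edges (ce : T -> T -> C) (s : seq (T * T * C)) : T -> T -> C :=
  fun p q => foldr (fun k c => if same_edge k.1.1 k.1.2 p q then k.2 else c) (ce p q) s.

Definition names_edge (p q : T) (k : T * T * C) := same_edge k.1.1 k.1.2 p q.

Lemma recolor_edgesC ce s p q : (~~ has (names_edge p q) s -> ce p q = ce q p) ->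
  recolor_edges ce s p q = recolor_edges ce s q p.
Proof.
elim: s => [/(_ isT)//|k s IHs /=]; rewrite /names_edge same_edgeC.
by case: ifP => //= _ /IHs.
Qed.

Lemma uniq_map_inj_in (f : T -> C) (s : seq T) : uniq (map f s) -> {in s &, injective f}.
Proof.
elim: s => //= q s IHs /andP[fq_new /IHs inj_s] p r; rewrite !inE.
case/orP=> [/eqP->|ps]; case/orP=> [/eqP->|rs] // E.
- by move: fq_new; rewrite E map_f.
- by move: fq_new; rewrite -E map_f.
- exact: inj_s.
Qed.

(* [c] and [c'] are the old and new edge colours at a vertex, whose old
   neighbours are [N]; only the edges to [S] are recoloured, with a permutation
   of fresh colours [F] and of the old colours of the edges to [S'] (a subset of [S]). *)
Variables (N : pred T) (S S' : seq T) (F : seq C) (c c' : T -> C).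
Hypotheses (c'_out : {in [predD N & S], c' =1 c}) (S'_N : {subset S' <= N})
  (perm_S : perm_eq (map c' S) (F ++ map c S')).

Lemma uniq_recolored : uniq F -> uniq S' -> {in N &, injective c} ->
  {in N, forall q, c q \notin F} -> uniq (F ++ map c S').
Proof.
move=> uniq_F uniq_S' inj_c F_fresh; rewrite cat_uniq uniq_F map_inj_in_uniq //=.
  rewrite uniq_S' andbT; apply/hasPn=> _ /mapP[q /S'_N qN ->]; exact: F_fresh.
exact: sub_in2 inj_c.
Qed.

Lemma recolor_inj_in : {in N &, injective c} -> {subset S' <= S} ->
  uniq (F ++ map c S') -> {in N, forall q, c q \notin F} ->
  {in [predU N & S] &, injective c'}.
Proof.
move=> inj_c S'_S uniq_old F_fresh.
have c'_S r : r \in S -> c' r \in F ++ map c S' by move=> rS; rewrite -(perm_mem perm_S) map_f.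
have old_away q r : q \in N -> q \notin S -> r \in S -> c' q != c' r.
  move=> qN qS rS; rewrite c'_out ?inE ?qS //; apply/negP=> /eqP cq.
  have := c'_S r rS; rewrite -cq mem_cat (negbTE (F_fresh q qN)) /=.
  case/mapP=> r' r'S' /(inj_c _ _ qN (S'_N r'S')) qr'.
  by move: qS; rewrite qr' S'_S.
move=> q r; rewrite !inE.
have [qS|qS] := boolP (q \in S); have [rS|rS] := boolP (r \in S).
- by move=> _ _; apply: uniq_map_inj_in qS rS; rewrite (perm_uniq perm_S).
- by rewrite orbF => _ rN E; move: (old_away r q rN rS qS); rewrite E eqxx.
- by rewrite orbF => qN _ E; move: (old_away q r qN qS rS); rewrite E eqxx.
- by rewrite !orbF => qN rN; rewrite !c'_out ?inE ?qS ?rS //; apply: inj_c.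
Qed.

Lemma recolor_avoid (k : C) : {in N, forall q, k != c q} -> k \notin F ->
  {in [predU N & S], forall q, k != c' q}.
Proof.
move=> c_k k_F q; rewrite !inE; have [qS _|qS] := boolP (q \in S).
  apply: contraNneq k_F => kc; have := map_f c' qS.
  rewrite (perm_mem perm_S) -kc mem_cat => /orP[//|/mapP[r /S'_N rN E]].
  by move: (c_k r rN); rewrite -E eqxx.
by rewrite orbF => qN; rewrite c'_out ?inE ?qS //; apply: c_k.
Qed.

End EdgeRecoloring.

Section Neighbours.
Variables (T : finType) (e : rel T) (p : T).

Lemma deg_le_size (l : seq T) : {subset e p <= l} -> deg e p <= size l.
Proof.
by move=> sub; rewrite /deg cardsE (leq_trans _ (card_size l)) //; apply/subset_leq_card/subsetP.
Qed.

Lemma exists_nbr_notin (l : seq T) : size l < deg e p -> exists2 q, e p q & q \notin l.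
Proof.
move=> lt_l; apply/subsetPn; apply: contraTN lt_l => /subsetP sub.
by rewrite -leqNgt deg_le_size.
Qed.

Lemma nbrs_of_deg (l : seq T) : uniq l -> {subset l <= e p} -> deg e p = size l ->
  {subset e p <= l}.
Proof.
move=> uniq_l sub deg_p q epq.
have /subset_cardP/(_ (introT subsetP sub)) eq_l : #|l| = #|e p|.
  by rewrite (card_uniqP uniq_l) -deg_p /deg cardsE.
by rewrite eq_l.
Qed.

End Neighbours.

Lemma deg_delete_edge (T : finType) (e : rel T) (a b : T) :
  e b a -> deg (delete_edge e a b) b < deg e b.
Proof.
move=> eba; apply: proper_card; rewrite properE; apply/andP; split.
  by apply/subsetP=> q; rewrite !inE => /andP[].
by apply/subsetPn; exists a; rewrite !inE /delete_edge /same_edge ?eba ?eqxx ?orbT ?andbF.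
Qed.

Lemma exists_free_color (T : finType) (e : rel T) (cv : T -> 'I_9) (ce : T -> T -> 'I_9) p :
  deg e p < 8 -> exists2 k, k != cv p & {in e p, forall q, ce p q != k}.
Proof.
move=> deg_p; have [k] : exists k, k \notin cv p :: [seq ce p q | q in e p].
  by apply: exists_color_notin; rewrite /= size_image -cardsE ltnS.
rewrite inE negb_or => /andP[k_v k_e]; exists k => // q epq.
by apply: contraNneq k_e => <-; rewrite map_f ?mem_enum.
Qed.

Ltac split_ands := repeat match goal with
  | H : is_true (_ && _) |- _ => case/andP: H => ? ?
  end.

Ltac rewrite_neqs := repeat match goal with
  | H : is_true (?a != ?b) |- context [?a == ?b] => rewrite (negbTE H)
  | H : is_true (?a != ?b) |- context [?b == ?a] => rewrite [b == a]eq_sym (negbTE H)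
  end.

Ltac check_colors :=
  repeat split; rewrite /perm_eq /= ?inE ?negb_or; rewrite_neqs; rewrite ?eqxx.

(* Give uv the colour b missing at v; if xu blocks b at u, pass b along the
   edges at w, y, or z and t to free another colour of v for uv. *)
Lemma recolor_configuration (C : eqType) (b vw vy vz vt xu xw wy zt zs : C) :
  uniq [:: b; vw; vy; vz; vt] -> xu != xw -> vy != wy -> vt != zt ->
  uniq [:: vw; xw; wy] -> uniq [:: vz; zt; zs] ->
  exists uv' xu' vw' xw' wy' vy' vz' vt' zt' : C,
  [/\ perm_eq [:: uv'; vw'; vy'; vz'; vt'] [:: b; vw; vy; vz; vt],
      perm_eq [:: xu'; xw'] [:: xu; xw], perm_eq [:: vy'; wy'] [:: vy; wy],
      perm_eq [:: vt'; zt'] [:: vt; zt] &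
      [/\ uv' != xu', uniq [:: vw'; xw'; wy'] & uniq [:: vz'; zt'; zs]]].
Proof.
move=> uniq_v xu_xw vy_wy vt_zt uniq_w uniq_z.
move: uniq_v uniq_w uniq_z; rewrite /= !inE !negb_or => uniq_v uniq_w uniq_z; split_ands.
have [xu_b|xu_b] := eqVneq xu b; last first.
  by exists b, xu, vw, xw, wy, vy, vz, vt, zt; check_colors.
subst xu; have [wy_b|wy_b] := eqVneq wy b; last first.
  by exists vw, b, b, xw, wy, vy, vz, vt, zt; check_colors.
subst wy; have [xw_vy|xw_vy] := eqVneq xw vy; last first.
  by exists vy, b, vw, xw, vy, b, vz, vt, zt; check_colors.
subst xw; have [zt_b|zt_b] := eqVneq zt b.
  subst zt; have [zs_vt|zs_vt] := eqVneq zs vt.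
    by subst zs; exists vz, vy, vw, b, vy, b, vy, vt, b; check_colors.
  by exists vt, b, vw, vy, b, vy, vz, b, vt; check_colors.
have [zs_b|zs_b] := eqVneq zs b; last first.
  by exists vz, b, vw, vy, b, vy, b, vt, zt; check_colors.
subst zs; have [zt_vy|zt_vy] := eqVneq zt vy.
  by subst zt; exists vt, vy, vw, b, vy, b, vz, vy, vt; check_colors.
by exists vz, vy, vw, b, vy, b, vy, vt, zt; check_colors.
Qed.

Section Configuration.
Variables (T : finType) (e : rel T) (v u w y z t x s : T).
Hypotheses (esym : symmetric e) (eirr : irreflexive e) (deg_v : deg e v <= 8).
Hypotheses (distinct : uniq [:: v; u; w; y; z; t; x]) (s_v : s != v) (s_t : s != t).
Hypotheses (evu : e v u) (evw : e v w) (evy : e v y) (evz : e v z) (evt : e v t)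
  (exu : e x u) (exw : e x w) (ewy : e w y) (ezt : e z t) (ezs : e z s).
Hypotheses (nbr_u : {subset e u <= [:: v; x]}) (nbr_w : {subset e w <= [:: v; x; y]})
  (nbr_z : {subset e z <= [:: v; t; s]}).

Let H := delete_edge e u v.
Variables (cv : T -> 'I_9) (ce : T -> T -> 'I_9).
Hypothesis col : total_coloring H cv ce.

Ltac distinct_vertices :=
  let D := fresh in have D := distinct; rewrite /= !inE !negb_or in D; split_ands.

Lemma H_away p : p != u -> p != v -> H p =1 e p.
Proof. by move=> pu pv q; rewrite /H /delete_edge /same_edge (negbTE pu) (negbTE pv) andbT. Qed.

Lemma H_sub_v : {subset [:: w; y; z; t] <= H v}.
Proof.
apply/allP; rewrite /= !mem_relE /H /delete_edge /same_edge evw evy evz evt eqxx.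
by distinct_vertices; rewrite_neqs.
Qed.

Lemma ceC p q : p != u -> q != u -> e p q -> ce p q = ce q p.
Proof.
case: col => sym _ _ _ pu qu epq; apply: sym.
by rewrite /H /delete_edge /same_edge epq (negbTE pu) (negbTE qu) !andbF.
Qed.

Lemma uniq_colors_at p (S : seq T) : p != u -> p != v -> {subset S <= e p} -> uniq S ->
  uniq (map (ce p) S).
Proof.
case: col => _ _ inj _ pu pv S_e; rewrite map_inj_in_uniq //.
by apply: sub_in2 (inj p) => q /S_e; rewrite mem_relE H_away.
Qed.

Lemma old_colors_v b : b != cv v -> {in H v, forall q, ce v q != b} ->
  uniq [:: b; ce v w; ce v y; ce v z; ce v t].
Proof.
case: col => _ _ inj _ b_v b_free.
apply: (uniq_recolored (F := [:: b]) (c := ce v) H_sub_v) => //.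
- by distinct_vertices; rewrite /= !inE; rewrite_neqs.
- by move=> q /b_free; rewrite inE.
Qed.

Lemma old_colors_x : ce x u != ce x w.
Proof.
have: uniq [:: ce x u; ce x w].
  apply: (@uniq_colors_at x [:: u; w]); distinct_vertices; rewrite_neqs => //.
  - by apply/allP; rewrite /= !mem_relE exu exw.
  - by rewrite /= inE; rewrite_neqs.
by rewrite /= inE andbT.
Qed.

Lemma old_colors_y : ce v y != ce w y.
Proof.
have: uniq [:: ce y v; ce y w].
  apply: (@uniq_colors_at y [:: v; w]); distinct_vertices; rewrite_neqs => //.
  - by apply/allP; rewrite /= !mem_relE !(esym y) evy ewy.
  - by rewrite /= inE; rewrite_neqs.
by distinct_vertices; rewrite /= inE andbT (ceC _ _ evy) ?(ceC _ _ ewy) //; rewrite_neqs.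
Qed.

Lemma old_colors_t : ce v t != ce z t.
Proof.
have: uniq [:: ce t v; ce t z].
  apply: (@uniq_colors_at t [:: v; z]); distinct_vertices; rewrite_neqs => //.
  - by apply/allP; rewrite /= !mem_relE !(esym t) evt ezt.
  - by rewrite /= inE; rewrite_neqs.
by distinct_vertices; rewrite /= inE andbT (ceC _ _ evt) ?(ceC _ _ ezt) //; rewrite_neqs.
Qed.

Lemma old_colors_w : uniq [:: ce v w; ce x w; ce w y].
Proof.
have: uniq [:: ce w v; ce w x; ce w y].
  apply: (@uniq_colors_at w [:: v; x; y]); distinct_vertices; rewrite_neqs => //.
  - by apply/allP; rewrite /= !mem_relE ewy !(esym w) evw exw.
  - by rewrite /= !inE; rewrite_neqs.
by distinct_vertices; rewrite (ceC _ _ evw) ?(ceC _ _ exw) //; rewrite_neqs.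
Qed.

Lemma old_colors_z : uniq [:: ce v z; ce z t; ce z s].
Proof.
have: uniq [:: ce z v; ce z t; ce z s].
  apply: (@uniq_colors_at z [:: v; t; s]); distinct_vertices; rewrite_neqs => //.
  - by apply/allP; rewrite /= !mem_relE ezt ezs (esym z) evz.
  - by rewrite /= !inE; rewrite_neqs.
by distinct_vertices; rewrite (ceC _ _ evz) //; rewrite_neqs.
Qed.

Section NewColors.
Variables (b uv' xu' vw' xw' wy' vy' vz' vt' zt' : 'I_9).
Hypotheses (b_v : b != cv v) (b_free : {in H v, forall q, ce v q != b}).
Hypotheses
  (perm_v : perm_eq [:: uv'; vw'; vy'; vz'; vt'] [:: b; ce v w; ce v y; ce v z; ce v t])
  (perm_x : perm_eq [:: xu'; xw'] [:: ce x u; ce x w])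
  (perm_y : perm_eq [:: vy'; wy'] [:: ce v y; ce w y])
  (perm_t : perm_eq [:: vt'; zt'] [:: ce v t; ce z t])
  (u_ok : uv' != xu') (w_ok : uniq [:: vw'; xw'; wy']) (z_ok : uniq [:: vz'; zt'; ce z s]).

Let ce' := recolor_edges ce [:: (u, v, uv'); (x, u, xu'); (v, w, vw'); (x, w, xw');
  (w, y, wy'); (v, y, vy'); (v, z, vz'); (v, t, vt'); (z, t, zt')].

Ltac compute_colors :=
  distinct_vertices; rewrite /ce' /recolor_edges /same_edge /=; rewrite_neqs; rewrite ?eqxx /=.

Lemma recolored_proper_at p (S S' : seq T) (F : seq 'I_9) :
  {subset e p <= [predU H p & S]} -> {in [predD H p & S], ce' p =1 ce p} ->
  {subset S' <= H p} -> {subset S' <= S} -> uniq F -> uniq S' ->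
  perm_eq (map (ce' p) S) (F ++ map (ce p) S') ->
  {in H p, forall q, ce p q \notin F} -> cv p \notin F ->
  {in e p &, injective (ce' p)} /\ {in e p, forall q, cv p != ce' p q}.
Proof.
case: col => _ _ inj inc e_sub out S'_H S'_S uniq_F uniq_S' perm_S F_fresh cv_F.
have uniq_old := uniq_recolored S'_H uniq_F uniq_S' (inj p) F_fresh.
split=> [q r /e_sub qS /e_sub rS|q /e_sub qS].
  exact: (recolor_inj_in out S'_H perm_S (inj p) S'_S uniq_old F_fresh).
by apply: (recolor_avoid out S'_H perm_S _ cv_F) => // r /inc.
Qed.

Lemma proper_at_v : {in e v &, injective (ce' v)} /\ {in e v, forall q, cv v != ce' v q}.
Proof.
apply: (@recolored_proper_at v [:: u; w; y; z; t] [:: w; y; z; t] [:: b]) => //.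
- move=> q; rewrite mem_relE => evq; rewrite !inE mem_relE /H /delete_edge evq /same_edge eqxx.
  by distinct_vertices; rewrite_neqs; case: (q == u).
- by move=> q; rewrite !inE !negb_or => /andP[qS _]; split_ands; compute_colors.
- exact: H_sub_v.
- exact: (@mem_behead _ [:: u; w; y; z; t]).
- by distinct_vertices; rewrite /= !inE; rewrite_neqs.
- suff -> : map (ce' v) [:: u; w; y; z; t] = [:: uv'; vw'; vy'; vz'; vt'] by [].
  by compute_colors.
- by move=> q /b_free; rewrite inE.
- by rewrite inE eq_sym.
Qed.

Lemma proper_at_permuted p (S : seq T) : p != u -> p != v -> uniq S -> {subset S <= e p} ->
  {in [predD e p & S], ce' p =1 ce p} -> perm_eq (map (ce' p) S) (map (ce p) S) ->
  {in e p &, injective (ce' p)} /\ {in e p, forall q, cv p != ce' p q}.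
Proof.
move=> pu pv uniq_S S_e out perm_S; have Hp := H_away pu pv.
apply: (@recolored_proper_at p S S [::]) => //.
- by move=> q; rewrite !inE !mem_relE Hp => ->.
- by move=> q; rewrite !inE !mem_relE Hp => /andP[qS epq]; apply: out; rewrite !inE qS.
- by move=> q /S_e; rewrite !mem_relE Hp.
Qed.

Lemma proper_at_x : {in e x &, injective (ce' x)} /\ {in e x, forall q, cv x != ce' x q}.
Proof.
apply: (@proper_at_permuted x [:: u; w]); distinct_vertices; rewrite_neqs => //.
- by rewrite /= inE; rewrite_neqs.
- by apply/allP; rewrite /= !mem_relE exu exw.
- by move=> q; rewrite !inE negb_or => /andP[/andP[? ?] _]; compute_colors.
- suff -> : map (ce' x) [:: u; w] = [:: xu'; xw'] by [].
  by compute_colors.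
Qed.

Lemma proper_at_y : {in e y &, injective (ce' y)} /\ {in e y, forall q, cv y != ce' y q}.
Proof.
apply: (@proper_at_permuted y [:: v; w]); distinct_vertices; rewrite_neqs => //.
- by rewrite /= inE; rewrite_neqs.
- by apply/allP; rewrite /= !mem_relE !(esym y) evy ewy.
- by move=> q; rewrite !inE negb_or => /andP[/andP[? ?] _]; compute_colors.
- suff -> : map (ce' y) [:: v; w] = [:: vy'; wy'].
    by rewrite /= -(ceC _ _ evy) -?(ceC _ _ ewy) //; rewrite_neqs.
  by compute_colors.
Qed.

Lemma proper_at_t : {in e t &, injective (ce' t)} /\ {in e t, forall q, cv t != ce' t q}.
Proof.
apply: (@proper_at_permuted t [:: v; z]); distinct_vertices; rewrite_neqs => //.
- by rewrite /= inE; rewrite_neqs.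
- by apply/allP; rewrite /= !mem_relE !(esym t) evt ezt.
- by move=> q; rewrite !inE negb_or => /andP[/andP[? ?] _]; compute_colors.
- suff -> : map (ce' t) [:: v; z] = [:: vt'; zt'].
    by rewrite /= -(ceC _ _ evt) -?(ceC _ _ ezt) //; rewrite_neqs.
  by compute_colors.
Qed.

Lemma inj_at_recolored p (S : seq T) :
  {subset e p <= S} -> uniq (map (ce' p) S) -> {in e p &, injective (ce' p)}.
Proof. by move=> sub uniq_S q r /sub qS /sub rS; apply: (uniq_map_inj_in uniq_S). Qed.

Lemma proper_at_unchanged p : p \notin [:: v; u; w; y; z; t; x] ->
  {in e p &, injective (ce' p)} /\ {in e p, forall q, cv p != ce' p q}.
Proof.
rewrite !inE !negb_or => p_out; split_ands.
have ce'_p q : ce' p q = ce p q by compute_colors.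
have Hp := @H_away p; case: col => _ _ inj inc.
split=> [q r epq epr|q epq]; rewrite !ce'_p.
  by apply: inj; rewrite mem_relE Hp.
by apply: inc; rewrite Hp.
Qed.

Lemma proper_at p : {in e p &, injective (ce' p)} /\
  (p \notin [:: u; w; z] -> {in e p, forall q, cv p != ce' p q}).
Proof.
have [->|p_v] := eqVneq p v; first by case: proper_at_v.
have [->|p_x] := eqVneq p x; first by case: proper_at_x.
have [->|p_y] := eqVneq p y; first by case: proper_at_y.
have [->|p_t] := eqVneq p t; first by case: proper_at_t.
have [->|p_u] := eqVneq p u.
  split; last by rewrite inE eqxx.
  apply: inj_at_recolored nbr_u _.
  suff -> : map (ce' u) [:: v; x] = [:: uv'; xu'] by rewrite /= inE u_ok.
  by compute_colors.
have [->|p_w] := eqVneq p w.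
  split; last by rewrite !inE eqxx orbT.
  apply: inj_at_recolored nbr_w _.
  suff -> : map (ce' w) [:: v; x; y] = [:: vw'; xw'; wy'] by [].
  by compute_colors.
have [->|p_z] := eqVneq p z.
  split; last by rewrite !inE eqxx !orbT.
  apply: inj_at_recolored nbr_z _.
  suff -> : map (ce' z) [:: v; t; s] = [:: vz'; zt'; ce z s] by [].
  by compute_colors.
have p_out : p \notin [:: v; u; w; y; z; t; x] by rewrite !inE; rewrite_neqs.
by have [inj inc] := proper_at_unchanged p_out.
Qed.

Lemma s_notin_recolored : s \notin [:: u; w; z].
Proof.
distinct_vertices; rewrite !inE !negb_or; apply/and3P; split.
- apply: contraTneq ezs => ->; rewrite esym; apply/negP=> /nbr_u.
  by rewrite !inE; rewrite_neqs.
- apply: contraTneq ezs => ->; rewrite esym; apply/negP=> /nbr_w.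
  by rewrite !inE; rewrite_neqs.
- by apply: contraTneq ezs => ->; rewrite eirr.
Qed.

Lemma recolored_colorable : total9_colorable e.
Proof.
case: col => sym vtx _ _; have s_D := s_notin_recolored.
apply: (@recolor_sparse_vertices _ _ [pred q | q \in [:: u; w; z]] cv ce') => //.
- move=> p; rewrite !inE => /or3P[]/eqP->.
  + exact: leq_trans (deg_le_size nbr_u) _.
  + exact: leq_trans (deg_le_size nbr_w) _.
  + exact: leq_trans (deg_le_size nbr_z) _.
- move=> p q epq; rewrite !inE => /or3P[]/eqP p_D; subst p.
  + by move: (nbr_u epq); distinct_vertices; rewrite !inE => /orP[]/eqP->; rewrite_neqs.
  + by move: (nbr_w epq); distinct_vertices; rewrite !inE => /or3P[]/eqP->; rewrite_neqs.
  + move: (nbr_z epq); distinct_vertices; rewrite !inE => /or3P[]/eqP->; rewrite_neqs => //.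
    by rewrite !inE in s_D.
- move=> p q epq; apply: recolor_edgesC; rewrite /= negb_or => /andP[not_uv _].
  by apply: sym; rewrite /H /delete_edge epq.
- move=> p q epq; rewrite !inE !negb_or => /and3P[p_u _ _] /and3P[q_u _ _].
  by apply: vtx; rewrite /H /delete_edge epq /same_edge (negbTE p_u) (negbTE q_u) !andbF.
- by move=> p; case: (proper_at p).
- by move=> p q epq p_D; apply: (proper_at p).2.
Qed.

End NewColors.

Lemma configuration_colorable : total9_colorable e.
Proof.
have [b b_v b_free] := @exists_free_color _ H cv ce v (leq_trans (deg_delete_edge evu) deg_v).
have [uv' [xu' [vw' [xw' [wy' [vy' [vz' [vt' [zt' [pv px py pt [uok wok zok]]]]]]]]]]] :=
  recolor_configuration (old_colors_v b_v b_free) old_colors_x old_colors_y old_colors_t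
    old_colors_w old_colors_z.
exact: recolored_colorable b_v b_free pv px py pt uok wok zok.
Qed.

End Configuration.

Theorem lemma2p14 (T : finType) (e : rel T) :
  sgraph e -> planar e ->
  (forall v, deg e v <= 8) -> (exists v, deg e v = 8) ->
  ~ has_4fan e ->
  ~ total9_colorable e ->
  (forall (U : finType) (f : rel U),
      sgraph f -> planar f -> (forall v, deg f v <= 8) -> ~ has_4fan f ->
      #|U| + nedges f < #|T| + nedges e -> total9_colorable f) ->
  ~ (exists v u w y z t x : T,
       [/\ deg e v = 8, uniq [:: v; u; w; y; z; t],
           [&& e v u, e v w, e v y, e v z & e v t],
           x \notin [:: v; u; w; y; z; t] &
           [/\ deg e u = 2, deg e w = 3, deg e z = 3 &
               [&& e x u, e x w, e w y & e z t]]]).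
Proof.
move=> sg pl deg8 _ no4fan not_col minimal [v [u [w [y [z [t [x [_ uniq_v
  /and5P[evu evw evy evz evt] x_new [deg_u deg_w deg_z /and4P[exu exw ewy ezt]]]]]]]]]].
case: (sg) => esym eirr; apply: not_col.
have distinct : uniq [:: v; u; w; y; z; t; x].
  by have := rcons_uniq [:: v; u; w; y; z; t] x; rewrite x_new uniq_v.
move: (distinct); rewrite /= !inE !negb_or => D; split_ands.
have nbr_u : {subset e u <= [:: v; x]}.
  apply: (@nbrs_of_deg _ _ u [:: v; x] _ _ deg_u); first by rewrite /= inE; rewrite_neqs.
  by apply/allP; rewrite /= !mem_relE !(esym u) evu exu.
have nbr_w : {subset e w <= [:: v; x; y]}.
  apply: (@nbrs_of_deg _ _ w [:: v; x; y] _ _ deg_w); first by rewrite /= !inE; rewrite_neqs.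
  by apply/allP; rewrite /= !mem_relE ewy !(esym w) evw exw.
have [s ezs] : exists2 s, e z s & s \notin [:: v; t] by apply: exists_nbr_notin; rewrite deg_z.
rewrite !inE negb_or => /andP[s_v s_t].
have nbr_z : {subset e z <= [:: v; t; s]}.
  apply: (@nbrs_of_deg _ _ z [:: v; t; s] _ _ deg_z); first by rewrite /= !inE; rewrite_neqs.
  by apply/allP; rewrite /= !mem_relE ezt ezs (esym z) evz.
have euv : e u v by rewrite esym.
have /total9_colorableP[cv [ce col]] := delete_edge_colorable sg pl deg8 no4fan minimal euv.
exact: (configuration_colorable esym eirr (deg8 v) distinct s_v s_t evu evw evy evz evt
  exu exw ewy ezt ezs nbr_u nbr_w nbr_z col).
Qed.
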